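(* Let $n\ge 2$, $PS$ be strictly proper, and let $k$ be an integer with $1\le k\le k_B$. Let $(\bar\beta_\ell,\bar\beta_h)\in\mathbb R^2$ satisfy $\bar\beta_\ell\le 1$, $\bar\beta_h\le 1$ and $\bar\beta_h+\frac{P(\ell\mid \ell)}{P(h\mid \ell)}\bar\beta_\ell\ge 1$. Then $u(\bar\beta_\ell,\bar\beta_h\mid \ell)\le u(\Sigma^*\mid \ell)$, with equality only when $(\bar\beta_\ell,\bar\beta_h)=(0,1)$.
   Context: Peer prediction setting with signals $\{\ell,h\}$ and a symmetric prior. $P(s\mid s')$ denotes the probability that another agent has signal $s$ given that one's own signal is $s'$, and $P_{s'}=P(\cdot\mid s')$. Standing assumptions: $P(h\mid h)>P(h\mid\ell)$, $P(h\mid\ell)>0$ and $P(\ell\mid h)>0$. $PS$ is a strictly proper scoring rule on $\{\ell,h\}$. For $\beta'\in\mathbb R$ and $(\beta_\ell,\beta_h)\in\mathbb R^2$, let $q=P(h\mid \ell)\beta_h+P(\ell\mid \ell)\beta_\ell$ and define $$f^\ell(\beta',(\beta_\ell,\beta_h))=\beta'\big[q\,PS(h,P_h)+(1-q)PS(\ell,P_h)\big]+(1-\beta')\big[q\,PS(h,P_\ell)+(1-q)PS(\ell,P_\ell)\big].$$ Define $$u(\bar\beta_\ell,\bar\beta_h\mid \ell)=\tfrac{n-k}{n-1}f^\ell(\bar\beta_\ell,(0,1))+\tfrac{k-1}{n-1}f^\ell(\bar\beta_\ell,(\bar\beta_\ell,\bar\beta_h)).$$ This is the interim utility of a signal-$\ell$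 deviator when $k$ deviators all play $(\bar\beta_\ell,\bar\beta_h)$, i.e. report $h$ with probability $\bar\beta_\ell$ given signal $\ell$ and with probability $\bar\beta_h$ given signal $h$, and the remaining $n-k$ agents report truthfully. The truthful interim utility is $u(\Sigma^*\mid \ell)=P(h\mid \ell)PS(h,P_\ell)+P(\ell\mid \ell)PS(\ell,P_\ell)$. $k_B=\min(k_B^h,k_B^\ell,n)$, where $k_B^h=\lceil (n-1)\mathbb E_{s\sim P_\ell}[PS(s,P_\ell)-PS(s,P_h)]/(P(\ell\mid\ell)(PS(h,P_h)-PS(\ell,P_h)))\rceil$ if $PS(h,P_h)>PS(\ell,P_h)$ and $k_B^h=n$ otherwise; and $k_B^\ell=\lceil (n-1)\mathbb E_{s\sim P_h}[PS(s,P_h)-PS(s,P_\ell)]/(P(h\mid h)(PS(\ell,P_\ell)-PS(h,P_\ell)))\rceil$ if $PS(\ell,P_\ell)>PS(h,P_\ell)$ and $k_B^\ell=n$ otherwise. *)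

(* R : realType (an archimedean real field, so Num.ceil exists). *)
From mathcomp Require Import all_boot all_order all_algebra.
From mathcomp Require Import reals.
Set Implicit Arguments. Unset Strict Implicit. Unset Printing Implicit Defensive.
Import Order.TTheory GRing.Theory Num.Theory.
Local Open Scope ring_scope.

Inductive signal := sl | sh.

Section PeerPrediction.
Variable R : realType.

(* A distribution on {ell,h} is represented by its probability of h, in [0,1]. *)
Definition expect (p : R) (g : signal -> R) : R := p * g sh + (1 - p) * g sl.

Definition strictly_proper (PS : signal -> R -> R) : Prop :=
  forall p q : R, 0 <= p <= 1 -> 0 <= q <= 1 -> p != q ->
    expect p (fun s => PS s q) < expect p (fun s => PS s p).

(* phl = P(h|ell) (so P_ell = phl), phh = P(h|h) (so P_h = phh),
   P(ell|ell) = 1 - phl, P(ell|h) = 1 - phh. *)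

Definition f_ell (PS : signal -> R -> R) (phl phh : R) (b' bl bh : R) : R :=
  let q := phl * bh + (1 - phl) * bl in
  b' * (q * PS sh phh + (1 - q) * PS sl phh)
  + (1 - b') * (q * PS sh phl + (1 - q) * PS sl phl).

Definition u_dev (PS : signal -> R -> R) (phl phh : R) (n k : nat) (bl bh : R) : R :=
  (n%:R - k%:R) / (n%:R - 1) * f_ell PS phl phh bl 0 1
  + (k%:R - 1) / (n%:R - 1) * f_ell PS phl phh bl bl bh.

Definition u_truth (PS : signal -> R -> R) (phl : R) : R :=
  phl * PS sh phl + (1 - phl) * PS sl phl.

Definition kB_h (PS : signal -> R -> R) (phl phh : R) (n : nat) : int :=
  if PS sl phh < PS sh phh then
    Num.ceil ((n%:R - 1) * expect phl (fun s => PS s phl - PS s phh)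
              / ((1 - phl) * (PS sh phh - PS sl phh)))
  else n%:Z.

Definition kB_l (PS : signal -> R -> R) (phl phh : R) (n : nat) : int :=
  if PS sh phl < PS sl phl then
    Num.ceil ((n%:R - 1) * expect phh (fun s => PS s phh - PS s phl)
              / (phh * (PS sl phl - PS sh phl)))
  else n%:Z.

Definition kB (PS : signal -> R -> R) (phl phh : R) (n : nat) : int :=
  Order.min (Order.min (kB_h PS phl phh n) (kB_l PS phl phh n)) n%:Z.

End PeerPrediction.

(* Write D = E_{P_ell}[PS(s, P_ell) - PS(s, P_h)] > 0 and let q be the
   probability that a fellow deviator reports h.  Since f^ell is affine in
   beta' and in q, the deviation gain is exactly
     (k - 1)/(n - 1) * (q - P(h|ell)) * slope - bl * D,
   where the slope, a convex combination of the score differences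
   PS(h, P) - PS(ell, P) at P_h and P_ell, is at most the one at P_h by strict
   properness.  The constraint on (bl, bh) gives
   0 <= q - P(h|ell) <= P(ell|ell) * bl, and k <= k_B^h says precisely that
   (k - 1)/(n - 1) * P(ell|ell) * slope < D; so the gain is negative once
   bl > 0, while bl = 0 forces q = P(h|ell), i.e. bh = 1. *)
From mathcomp Require Import all_boot all_order all_algebra.
From mathcomp Require Import reals.
From mathcomp Require Import ring lra.
Import Order.TTheory GRing.Theory Num.Theory.
Set Implicit Arguments. Unset Strict Implicit.
Local Open Scope ring_scope.

Section Arithmetic.
Variable R : realFieldType.

Lemma deviation_gain_lt (w t s x y D bl : R) :
  0 <= w -> 0 < bl <= 1 -> 0 <= s <= t * bl -> x <= y -> 0 < D ->
  (0 < y -> w * t * y < D) ->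
  w * s * (bl * y + (1 - bl) * x) < bl * D.
Proof.
move=> w0 /andP[bl0 bl1] /andP[s0 st] xy D0 hy.
have X_le_y : bl * y + (1 - bl) * x <= y.
  have : 0 <= (1 - bl) * (y - x) by rewrite mulr_ge0 ?subr_ge0.
  lra.
have ws0 : 0 <= w * s by exact: mulr_ge0.
apply: le_lt_trans (ler_wpM2l ws0 X_le_y) _.
case: (lerP y 0) => [y0 | y0].
  by rewrite (le_lt_trans (mulr_ge0_le0 ws0 y0)) // mulr_gt0.
have wty_lt : bl * (w * t * y) < bl * D by rewrite ltr_pM2l // hy.
apply: le_lt_trans wty_lt.
have -> : bl * (w * t * y) = w * (t * bl) * y by ring.
by rewrite ler_wpM2r ?(ltW y0) // ler_wpM2l.
Qed.

End Arithmetic.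

Section PeerPrediction.
Variables (R : realType) (PS : signal -> R -> R).

Definition score_diff (p : R) : R := PS sh p - PS sl p.

Definition truthful_gap (p r : R) : R := expect p (fun s => PS s p - PS s r).

Definition report_h_prob (p bl bh : R) : R := p * bh + (1 - p) * bl.

Lemma truthful_gap_gt0 (p r : R) : strictly_proper PS ->
  0 <= p <= 1 -> 0 <= r <= 1 -> p != r -> 0 < truthful_gap p r.
Proof.
move=> SP p01 r01 pr; have := SP p r p01 r01 pr.
by rewrite /truthful_gap /expect; lra.
Qed.

(* The two gaps sum to (r - p) * (score_diff r - score_diff p). *)
Lemma score_diff_lt (p r : R) : strictly_proper PS ->
  0 <= p -> p < r -> r <= 1 -> score_diff p < score_diff r.
Proof.
move=> SP p0 pr r1.
have gpr := truthful_gap_gt0 (p := p) (r := r) SP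
  ltac:(lra) ltac:(lra) (negbT (lt_eqF pr)).
have grp := truthful_gap_gt0 (p := r) (r := p) SP
  ltac:(lra) ltac:(lra) (negbT (gt_eqF pr)).
have : 0 < (r - p) * (score_diff r - score_diff p).
  by move: gpr grp; rewrite /truthful_gap /expect /score_diff => ? ?; nra.
by rewrite pmulr_rgt0 ?subr_gt0.
Qed.

Lemma f_ell_affine (p r b' bl bh : R) :
  f_ell PS p r b' bl bh = u_truth PS p - b' * truthful_gap p r
    + (report_h_prob p bl bh - p)
      * (b' * score_diff r + (1 - b') * score_diff p).
Proof.
by rewrite /f_ell /u_truth /truthful_gap /expect /score_diff /report_h_prob; ring.
Qed.

Lemma u_dev_sub_truth (p r : R) (n k : nat) (bl bh : R) : (1 < n)%N ->
  u_dev PS p r n k bl bh - u_truth PS p =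
    (k%:R - 1) / (n%:R - 1) * (report_h_prob p bl bh - p)
      * (bl * score_diff r + (1 - bl) * score_diff p)
    - bl * truthful_gap p r.
Proof.
move=> n1; have : (1 < n%:R :> R) by rewrite ltr1n.
rewrite /u_dev !f_ell_affine /report_h_prob => ?.
by field; lra.
Qed.

Lemma report_h_prob_bounds (p bl bh : R) : 0 < p ->
  bh <= 1 -> 1 <= bh + (1 - p) / p * bl ->
  p <= report_h_prob p bl bh <= p + (1 - p) * bl.
Proof.
move=> p0 bh1 hc.
have : p * 1 <= p * (bh + (1 - p) / p * bl) by rewrite ler_pM2l.
rewrite mulrDr mulrA mulrCA divff ?mulr1 ?gt_eqF // /report_h_prob => ?.
apply/andP; split; nra.
Qed.

(* Only the k_B^h component of k_B is relevant for a signal-ell deviator. *)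
Lemma kB_h_gain_lt (p r : R) (n k : nat) : 0 < p < 1 -> (1 < n)%N ->
  k%:Z <= kB_h PS p r n -> 0 < score_diff r ->
  (k%:R - 1) / (n%:R - 1) * (1 - p) * score_diff r < truthful_gap p r.
Proof.
move=> /andP[p0 p1] n1; rewrite /kB_h /score_diff subr_gt0 => + y0; rewrite y0.
set z := (_ / _) => kz.
have {}kz : (k%:Z - 1)%:~R < z.
  by rewrite -ceil_gt_int (lt_le_trans _ kz) ?gtrBl.
have n1R : 0 < n%:R - 1 :> R by rewrite subr_gt0 ltr1n.
have den : 0 < (1 - p) * (PS sh r - PS sl r) by rewrite mulr_gt0 ?subr_gt0.
move: kz; rewrite /z ltr_pdivlMr // rmorphB /= => kz.
rewrite -mulrA mulrAC ltr_pdivrMr // mulrC.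
by rewrite /truthful_gap mulrC [X in _ < X]mulrC; exact: kz.
Qed.

End PeerPrediction.

Theorem lemma2 (R : realType) (phl phh : R) (PS : signal -> R -> R)
    (n k : nat) (bl bh : R) :
  0 < phl -> phl < phh -> phh < 1 ->
  strictly_proper PS ->
  (2 <= n)%N ->
  (1 <= k)%N -> (k%:Z <= kB PS phl phh n) ->
  bl <= 1 -> bh <= 1 -> 1 <= bh + (1 - phl) / phl * bl ->
  u_dev PS phl phh n k bl bh <= u_truth PS phl /\
  (u_dev PS phl phh n k bl bh = u_truth PS phl -> bl = 0 /\ bh = 1).
Proof.
move=> p0 pr r1 SP n2 k1 hk bl1 bh1 hc.
have /andP[qp qp'] := report_h_prob_bounds p0 bh1 hc.
have D0 := truthful_gap_gt0 (p := phl) (r := phh) SP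
  ltac:(lra) ltac:(lra) (negbT (lt_eqF pr)).
have bl0 : 0 <= bl.
  have : 0 <= (1 - phl) * bl by lra.
  by rewrite pmulr_rge0 // subr_gt0; lra.
have gain_lt : 0 < bl -> u_dev PS phl phh n k bl bh - u_truth PS phl < 0.
  move=> blpos; rewrite u_dev_sub_truth // subr_lt0.
  apply: (deviation_gain_lt (t := 1 - phl)) => //.
  - by rewrite divr_ge0 ?subr_ge0 ?ler1n // ltnW.
  - by rewrite blpos.
  - by rewrite subr_ge0 qp /= lerBlDl.
  - by apply/ltW/score_diff_lt => //; lra.
  - apply: kB_h_gain_lt => //; first by rewrite p0; lra.
    by move: hk; rewrite /kB !le_min => /andP[/andP[]].
move: bl0; rewrite le0r => /orP[/eqP bl_eq0 | blpos].
- have bh_eq1 : bh = 1.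
    have : phl * 1 <= phl * bh.
      by move: qp; rewrite /report_h_prob bl_eq0 mulr0 addr0 mulr1.
    by rewrite ler_pM2l // => ?; lra.
  suff : u_dev PS phl phh n k bl bh - u_truth PS phl = 0.
    by move/eqP; rewrite subr_eq0 => /eqP ->.
  by rewrite u_dev_sub_truth // /report_h_prob bl_eq0 bh_eq1; ring.
- have := gain_lt blpos; rewrite subr_lt0 => lt_truth.
  by split=> [|eq_truth]; [exact: ltW | move: lt_truth; rewrite eq_truth ltxx].
Qed.
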